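(* Let $A$ be as in the context, and assume that (i) no two con-edges for the same cluster belong to the same connected component of the conflict graph $K_A$; (ii) $A[\rho]$ is connected for every cluster $\rho$; (iii) no con-edge for a cluster $\rho$ is a bridge of $A[\rho]$; (iv) $K_A$ is bipartite; (v) $A$ contains no self-loop. Let $e$ be a con-edge of $A$ that crosses no other con-edge of $A$. Then there exists a planar set of spanning trees for $A$ if and only if there exists a planar set $S'$ of spanning trees for $A$ with $e\in S'$.
   Context: Let $C(G,T)$ be an embedded flat clustered graph: $G$ is a planar graph with a fixed planar embedding, $T$ a rooted tree whose leaves are the vertices of $G$ and whose non-root internal nodes (clusters) are all children of the root; a vertex belongs to the cluster that is its parent. For a face $f$ of $G$ let $B_f$ be the clockwise sequence of vertex occurrences on its boundary. A con-edge for a cluster $\alpha$ is a pair of occurrences on the boundary of one face $f$ of two distinct vertices of $\alpha$ lying in different connected components of $G[\alpha]$, drawn inside $f$; two con-edges in the same face cross (have a conflict) if their occurrences alternate along $B_f$. The multigraph of con-edges is obtained by inserting all con-edges into the faces, contracting each connected component of each $G[\alpha]$ into one vertex (belonging to $\alpha$), and deleting the edges of $G$. Throughout, $A$ denotes this multigraph or any multigraph obtained from it by a sequence of operations each of which removes some edges or contracts some edges that cross no other edge (contracting identifies the two end-vertices and deletes the edge). $A[\alpha]$ is the subgraph formed by the con-edges for $\alpha$. The conflict graph $K_A$ has one vertex per con-edge of $A$ and an edge between any two crossing con-edges. A planar set of spanning trees for $A$ is a set $S$ of edges of $A$ such that, for each cluster $\alpha$, the edges of $S$ for $\alpha$ form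 a tree spanning all vertices of $A$ belonging to $\alpha$, and no two edges of $S$ cross. *)

From mathcomp Require Import all_boot.
Set Implicit Arguments. Unset Strict Implicit. Unset Printing Implicit Defensive.

(* The multigraph of con-edges A (possibly after removals / contractions of
   uncrossed edges).  Vertices and con-edges form finite types; each vertex
   belongs to a cluster; each con-edge is for a cluster, has two end-vertices
   (a multigraph: parallel edges allowed, self-loops representable), and is
   drawn inside a face [cface x] of G joining the occurrences at positions
   [cpos1 x] and [cpos2 x] of the clockwise boundary sequence B_f. *)
Record conGraph := ConGraph {
  cluster : finType;
  cvertex : finType;
  cedge : finType;
  face : finType;
  vclus : cvertex -> cluster;
  eclus : cedge -> cluster;
  src : cedge -> cvertex;
  dst : cedge -> cvertex;
  cface : cedge -> face;
  cpos1 : cedge -> nat;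
  cpos2 : cedge -> nat;
  src_clus : forall x, vclus (src x) = eclus x;
  dst_clus : forall x, vclus (dst x) = eclus x;
  (* every cluster is a non-root internal node, hence owns some vertex *)
  clus_nonempty : forall c, exists v, vclus v = c
}.

Definition alternate (a b c d : nat) : bool :=
  let lo := minn a b in let hi := maxn a b in
  ((lo < c < hi) && ((d < lo) || (hi < d))) ||
  ((lo < d < hi) && ((c < lo) || (hi < c))).

Section Defs.
Variable A : conGraph.

Definition cross : rel (cedge A) := fun x y =>
  (cface x == cface y) && alternate (cpos1 x) (cpos2 x) (cpos1 y) (cpos2 y).

Definition adj (T : {set cedge A}) : rel (cvertex A) := fun u v =>
  [exists x in T, ((src x == u) && (dst x == v)) || ((src x == v) && (dst x == u))].

Definition edges_of (c : cluster A) : {set cedge A} := [set x | eclus x == c].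

Definition connected_on (c : cluster A) (T : {set cedge A}) : Prop :=
  forall u v, vclus u = c -> vclus v = c -> connect (adj T) u v.

Definition is_bridge (T : {set cedge A}) (x : cedge A) : Prop :=
  x \in T /\ ~~ connect (adj (T :\ x)) (src x) (dst x).

(* edge set T (all of whose edges are for c) is a tree spanning the
   vertices of cluster c: connected and acyclic (every edge a bridge) *)
Definition spanning_tree_of (c : cluster A) (T : {set cedge A}) : Prop :=
  connected_on c T /\ forall x, x \in T -> is_bridge T x.

Definition planar_spanning_trees (S : {set cedge A}) : Prop :=
  (forall c, spanning_tree_of c (S :&: edges_of c)) /\
  (forall x y, x \in S -> y \in S -> ~~ cross x y).

Definition hyp_i : Prop :=
  forall x y, x != y -> eclus x = eclus y -> ~~ connect cross x y.
Definition hyp_ii : Prop := forall c, connected_on c (edges_of c).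
Definition hyp_iii : Prop :=
  forall x, ~ is_bridge (edges_of (eclus x)) x.
Definition hyp_iv : Prop :=
  exists col : cedge A -> bool, forall x y, cross x y -> col x != col y.
Definition hyp_v : Prop := forall x : cedge A, src x != dst x.

End Defs.

From mathcomp Require Import all_boot zify.
Set Implicit Arguments. Unset Strict Implicit. Unset Printing Implicit Defensive.

(* Only hypothesis (v) and the fact that e is uncrossed matter.  Take a planar
   set S of spanning trees and let T be its tree for the cluster of e.  As e is
   not a self-loop, some edge f of T separates the ends of e in T; exchanging f
   for e yields again a spanning tree, the other trees are untouched, and since
   e crosses nothing the new set stays planar. *)

Lemma alternate_sym a b c d : alternate a b c d = alternate c d a b.
Proof. by rewrite /alternate; apply/idP/idP; lia. Qed.

Section ConGraph.
Variable A : conGraph.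
Implicit Types (U V T S : {set cedge A}) (x e f : cedge A).

Lemma cross_sym : symmetric (@cross A).
Proof. by move=> x y; rewrite /cross eq_sym alternate_sym. Qed.

Lemma adj_sym U : symmetric (adj U).
Proof.
move=> a b; apply/existsP/existsP => -[x /andP[xU ends]];
  by exists x; rewrite xU orbC.
Qed.

Lemma connect_adj_sym U : connect_sym (adj U).
Proof. exact/sym_connect_sym/adj_sym. Qed.

Lemma connect_adj_ends U x : x \in U -> connect (adj U) (src x) (dst x).
Proof. by move=> xU; apply/connect1/existsP; exists x; rewrite xU !eqxx. Qed.

Lemma connect_adjS U V : U \subset V -> subrel (connect (adj U)) (connect (adj V)).
Proof.
move=> sUV; apply: connect_sub => a b /existsP[x /andP[xU ends]].
by apply/connect1/existsP; exists x; rewrite (subsetP sUV).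
Qed.

Lemma connect_adj0 a b : connect (adj (set0 : {set cedge A})) a b -> a = b.
Proof.
have cl : closed (adj (set0 : {set cedge A})) (pred1 a).
  by apply: (intro_closed (connect_adj_sym _)) => y z /existsP[x]; rewrite inE.
by move/(closed_connect cl); rewrite inE eqxx => /esym/eqP.
Qed.

Lemma connect_adjU1 U x a b : connect (adj (x |: U)) a b ->
  [|| connect (adj U) a b,
      connect (adj U) a (src x) && connect (adj U) (dst x) b |
      connect (adj U) a (dst x) && connect (adj U) (src x) b].
Proof.
pose reach := [pred b | [|| connect (adj U) a b,
   connect (adj U) a (src x) && connect (adj U) (dst x) b |
   connect (adj U) a (dst x) && connect (adj U) (src x) b]].
have cl : closed (adj (x |: U)) reach.
  apply: (intro_closed (connect_adj_sym _)).
  move=> y z /existsP[g /andP[/setU1P[-> | gU] ends]]; rewrite !inE.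
    by case/orP: ends => /andP[/eqP<- /eqP<-];
      case/or3P=> [->|/andP[-> yz]|/andP[-> yz]]; rewrite ?connect0 ?orbT //;
      rewrite (connect_trans yz) // connect_adj_sym.
  have yz : connect (adj U) y z by apply/connect1/existsP; exists g; rewrite gU.
  by case/or3P=> [ay|/andP[-> xy]|/andP[-> xy]];
    rewrite ?(connect_trans ay yz) ?(connect_trans xy yz) ?orbT.
by move/(closed_connect cl); rewrite inE connect0 => /esym.
Qed.

Lemma connect_adjU1_ends U V x a b : U \subset V ->
  connect (adj (x |: U)) a b -> ~~ connect (adj U) a b ->
  connect (adj V) a b -> connect (adj V) (src x) (dst x).
Proof.
move=> sUV /connect_adjU1 /or3P[-> // | | ] /andP[ax xb] _ ab;
  have {}ax := connect_adjS sUV ax; have {}xb := connect_adjS sUV xb;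
  rewrite connect_adj_sym in ax; rewrite connect_adj_sym in xb.
- exact: connect_trans ax (connect_trans ab xb).
- by rewrite connect_adj_sym; apply: connect_trans ax (connect_trans ab xb).
Qed.

Lemma connect_adjU1_id U x : connect (adj U) (src x) (dst x) ->
  connect (adj (x |: U)) =2 connect (adj U).
Proof.
move=> ends a b; apply/idP/idP; last exact/connect_adjS/subsetUr.
apply: connect_sub a b => a b /existsP[g /andP[/setU1P[-> | gU] ab]].
  by case/orP: ab => /andP[/eqP<- /eqP<-]; rewrite // connect_adj_sym.
by apply/connect1/existsP; exists g; rewrite gU.
Qed.

Lemma connect_adj_swap U e f :
  connect (adj (f |: U)) (src e) (dst e) -> ~~ connect (adj U) (src e) (dst e) ->
  connect (adj (e |: U)) (src f) (dst f).
Proof.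
move=> fe eU; apply: connect_adjU1_ends fe eU _; first exact: subsetUr.
exact/connect_adj_ends/setU11.
Qed.

Lemma separating_edge T u v :
  (forall x, x \in T -> is_bridge T x) -> connect (adj T) u v -> u != v ->
  exists2 f, f \in T & ~~ connect (adj (T :\ f)) u v.
Proof.
move=> bridges uv neq_uv.
pose joins U := (U \subset T) && connect (adj U) u v.
have joinsT : joins T by rewrite /joins subxx uv.
have [U /andP[sUT Uuv] minU] := arg_minnP (fun U => #|U|) joinsT.
have [U0 | [f fU]] := set_0Vmem U.
  by move: Uuv neq_uv; rewrite U0 => /connect_adj0 ->; rewrite eqxx.
have fT := subsetP sUT f fU.
have sUfTf : U :\ f \subset T :\ f by apply: setSD.
have Uf_uv : ~~ connect (adj (U :\ f)) u v.
  apply/negP => Uf_uv; have /minU : joins (U :\ f).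
    by rewrite /joins Uf_uv (subset_trans (subD1set U f) sUT).
  by rewrite (cardsD1 f U) fU ltnn.
exists f => //; apply/negP => Tf_uv; case: (bridges f fT) => _ /negP; apply.
by apply: (connect_adjU1_ends sUfTf _ Uf_uv Tf_uv); rewrite setD1K.
Qed.

Lemma spanning_tree_exchange c T e f :
  spanning_tree_of c T -> f \in T ->
  connect (adj T) (src e) (dst e) -> ~~ connect (adj (T :\ f)) (src e) (dst e) ->
  spanning_tree_of c (e |: (T :\ f)).
Proof.
move=> [Tcon bridges] fT Te Tf_e.
have defT : f |: (T :\ f) = T by rewrite setD1K.
have swap_id : connect (adj (f |: (e |: (T :\ f)))) =2 connect (adj (e |: (T :\ f))).
  by apply/connect_adjU1_id/(connect_adj_swap _ Tf_e); rewrite defT.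
split=> [u v uc vc | g /setU1P[-> | gTf]].
- rewrite -swap_id; apply: connect_adjS (Tcon u v uc vc).
  by rewrite -{1}defT setUS ?subsetUr.
- split; first exact: setU11.
  apply: contra Tf_e; apply: connect_adjS.
  by rewrite setDUl setDv set0U subD1set.
have [_ gT] := setD1P gTf.
split; first by rewrite setU1r.
have Vg : ~~ connect (adj ((T :\ f) :\ g)) (src g) (dst g).
  by apply: contra (bridges g gT).2; apply/connect_adjS/setSD/subD1set.
have sub : (e |: (T :\ f)) :\ g \subset e |: ((T :\ f) :\ g).
  by rewrite setDUl setSU ?subD1set.
apply/negP => /(connect_adjS sub)/connect_adj_swap/(_ Vg).
by rewrite setD1K //; apply/negP.
Qed.

Lemma edges_of_exchange S e f d : eclus f = eclus e ->
  (e |: (S :\ f)) :&: edges_of d =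
  if d == eclus e then e |: ((S :&: edges_of d) :\ f) else S :&: edges_of d.
Proof.
move=> fe; apply/setP => z; case: ifP => [/eqP -> | de]; rewrite !inE.
  by case: (z =P e) => [-> | _]; rewrite ?eqxx ?andbA.
have ed : (eclus e == d) = false by rewrite eq_sym.
case: (z =P e) => [-> | _] /=; first by rewrite ed andbF.
by case: (z =P f) => [-> | _]; rewrite ?fe ?ed ?andbF.
Qed.

Lemma uncrossed_setU1 S e : (forall y, ~~ cross e y) ->
  {in S &, forall x y, ~~ cross x y} -> {in e |: S &, forall x y, ~~ cross x y}.
Proof.
move=> e_free planar x y /setU1P[-> | xS] /setU1P[-> | yS]; rewrite ?e_free //.
  by rewrite cross_sym e_free.
exact: planar.
Qed.

End ConGraph.

Theorem lemma8 (A : conGraph) (e : cedge A) :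
  hyp_i A -> hyp_ii A -> hyp_iii A -> hyp_iv A -> hyp_v A ->
  (forall y, ~~ cross e y) ->
  ((exists S : {set cedge A}, planar_spanning_trees S) <->
   (exists S' : {set cedge A}, planar_spanning_trees S' /\ e \in S')).
Proof.
move=> _ _ _ _ no_loop e_free.
split=> [[S [trees planar]] | [S [planarS _]]]; last by exists S.
have [Tcon Tbridges] := trees (eclus e).
have Te : connect (adj (S :&: edges_of (eclus e))) (src e) (dst e).
  by apply: Tcon; rewrite ?src_clus ?dst_clus.
have [f fT Tf_e] := separating_edge Tbridges Te (no_loop e).
have [_ /[!inE] /eqP fe] := setIP fT.
exists (e |: (S :\ f)); split; last exact: setU11.
split=> [d | ]; last first.
  apply: uncrossed_setU1 => // x y /setD1P[_ xS] /setD1P[_ yS]; exact: planar.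
rewrite edges_of_exchange //; case: eqP => [-> | _]; last exact: trees.
exact: spanning_tree_exchange.
Qed.
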